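(* Let $\Gamma$ be a complete dominance graph on vertex set $\{1,\dots,n\}$ and let $\tilde{\Gamma}$ be any finite simple weighted digraph on the same vertex set with weights $0\le\tilde{w}_{ij}\le 1$. Let $L$ and $\tilde{L}$ be the graph Laplacians of $\Gamma$ and $\tilde{\Gamma}$, respectively. Then $\mathrm{hd}(L,\tilde{L})\le n-1$.
   Context: For a weighted digraph with weights $w_{ij}\ge 0$ ($w_{ij}=0$ iff $(i,j)$ is not an edge), $d^{+}(i)=\sum_j w_{ij}$, $D=\mathrm{diag}(d^{+}(1),\dots,d^{+}(n))$, $A=[w_{ij}]$, and the graph Laplacian is $L=D-A$. A complete dominance graph is an acyclic tournament (for each pair of distinct vertices exactly one of $(i,j),(j,i)$ is an edge) in which every edge has weight $1$. For $n\times n$ complex matrices $M,\tilde{M}$ with eigenvalues $\lambda_1,\dots,\lambda_n$ and $\tilde\lambda_1,\dots,\tilde\lambda_n$, the spectral variation is $\mathrm{sv}(M,\tilde M)=\max_i\min_j|\tilde\lambda_i-\lambda_j|$ and the Hausdorff distance is $\mathrm{hd}(M,\tilde M)=\max\{\mathrm{sv}(M,\tilde M),\mathrm{sv}(\tilde M,M)\}$. *)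

(* Real weights in an arbitrary real closed field R;
   eigenvalues taken in the algebraic closure R[i] = complex R. *)
From HB Require Import structures.
From mathcomp Require Import all_boot all_order all_algebra.
From mathcomp Require Import complex.
Set Implicit Arguments. Unset Strict Implicit. Unset Printing Implicit Defensive.
Import Order.TTheory GRing.Theory Num.Theory.
Local Open Scope ring_scope.

Section Defs.
Variable R : rcfType.

(* A weighted digraph on vertex set 'I_n is given by its weight matrix
   w = [w_ij] (w_ij >= 0, and w_ij = 0 iff (i,j) is not an edge). *)

Definition outdeg n (w : 'M[R]_n) (i : 'I_n) : R := \sum_(j < n) w i j.

Definition laplacian n (w : 'M[R]_n) : 'M[R]_n :=
  diag_mx (\row_i outdeg w i) - w.

Definition edge n (w : 'M[R]_n) : rel 'I_n := fun i j => w i j != 0.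

Definition simple_weighted_digraph n (w : 'M[R]_n) : Prop :=
  (forall i j, 0 <= w i j) /\ (forall i, w i i = 0).

Definition acyclic n (w : 'M[R]_n) : Prop :=
  ~ (exists (x : 'I_n) (s : seq 'I_n),
        [&& (0 < size s)%N, path (edge w) x s & last x s == x]).

Definition tournament n (w : 'M[R]_n) : Prop :=
  (forall i, ~~ edge w i i) /\
  (forall i j, i != j -> (edge w i j) (+) (edge w j i)).

Definition complete_dominance_graph n (w : 'M[R]_n) : Prop :=
  simple_weighted_digraph w /\ tournament w /\ acyclic w /\
  (forall i j, edge w i j -> w i j = 1).

Definition cmx n (M : 'M[R]_n) : 'M[R[i]]_n := map_mx (real_complex R) M.

(* sv(M, M') <= c, where sv(M,M') = max_i min_j |lambda'_i - lambda_j|,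
   lambda (resp. lambda') ranging over the (finitely many, nonempty set of)
   complex eigenvalues of M (resp. M').  For a max-min over finite nonempty
   sets, "max_i min_j d_ij <= c" literally means "for every i there is j
   with d_ij <= c". *)
Definition sv_le n (M M' : 'M[R]_n) (c : R) : Prop :=
  forall l', eigenvalue (cmx M') l' ->
    exists2 l, eigenvalue (cmx M) l & `|l' - l| <= (real_complex R c).

(* hd(M, M') <= c  iff  max(sv(M,M'), sv(M',M)) <= c *)
Definition hd_le n (M M' : 'M[R]_n) (c : R) : Prop :=
  sv_le M M' c /\ sv_le M' M c.

End Defs.

(* Every eigenvalue of the Laplacian of an acyclic digraph is an out-degree:
   the support of a left eigenvector has a vertex j with no in-edge from the
   support, and the eigen-equation at j reads lambda = d+(j).  Hence the
   spectrum of L lies in [0, n-1], within n-1 of the eigenvalue 0 that every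
   Laplacian has (the all-ones vector).  Conversely, the source of the
   dominance graph has out-degree n-1, which is an eigenvalue of L, and by
   Gershgorin every eigenvalue of L~ lies in a disc |z - d| <= d with
   0 <= d <= n-1, which is contained in the disc |z - (n-1)| <= n-1. *)

From mathcomp Require Import all_boot all_order all_algebra.
From mathcomp Require Import complex.
Import Order.TTheory GRing.Theory Num.Theory.
Local Open Scope ring_scope.
Local Open Scope complex_scope.

Lemma char_poly_trmx (R : comNzRingType) n (A : 'M[R]_n) :
  char_poly A^T = char_poly A.
Proof.
rewrite /char_poly -det_tr; congr (\det _).
by apply/matrixP => i j; rewrite !mxE eq_sym.
Qed.

Lemma eigenvalue_trmx (F : fieldType) n (A : 'M[F]_n) a :
  eigenvalue A^T a = eigenvalue A a.
Proof. by rewrite !eigenvalue_root_char char_poly_trmx. Qed.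

Lemma eigenvalue_colP (F : fieldType) n (A : 'M[F]_n) a :
  reflect (exists2 u : 'cV_n, A *m u = a *: u & u != 0) (eigenvalue A a).
Proof.
rewrite -eigenvalue_trmx; apply: (iffP eigenvalueP) => [[v vA v_nz]|[u Au u_nz]].
  by exists v^T; rewrite ?trmx_eq0 // -[A]trmxK -trmx_mul vA linearZ.
by exists u^T; rewrite ?trmx_eq0 // -trmx_mul Au linearZ.
Qed.

Lemma gershgorin (F : numFieldType) n (A : 'M[F]_n) l :
  eigenvalue A l -> exists i, `|l - A i i| <= \sum_(j | j != i) `|A i j|.
Proof.
case/eigenvalue_colP => u Au /cV0Pn[i0 u_i0].
pose i := Order.arg_max (disp := ring_display) i0 xpredT (fun i => `|u i 0|).
have u_max j : `|u j 0| <= `|u i 0|.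
  rewrite /i; case: real_arg_maxP => [//|k _|k _ max_k]; first exact: normr_real.
  exact: max_k.
have u_i_gt0 : 0 < `|u i 0| by rewrite (lt_le_trans _ (u_max i0)) ?normr_gt0.
have row_i : (l - A i i) * u i 0 = \sum_(j | j != i) A i j * u j 0.
  have := congr1 (fun v : 'cV_n => v i 0) Au; rewrite /= !mxE (bigD1 i) //=.
  by rewrite mulrBl => <-; rewrite addrAC subrr add0r.
exists i; rewrite -(ler_pM2r u_i_gt0) -normrM row_i mulr_suml.
apply: le_trans (ler_norm_sum _ _ _) _; apply: ler_sum => j _.
by rewrite normrM ler_wpM2l.
Qed.

Lemma ler_dist_shift_center (F : numDomainType) (l d c : F) :
  0 <= d -> d <= c -> `|l - d| <= d -> `|l - c| <= c.
Proof.
move=> d_ge0 d_le_c l_near_d; apply: le_trans (ler_distD d l c) _.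
rewrite [`|d - c|]distrC [`|c - d|]ger0_norm ?subr_ge0 //.
by apply: le_trans (lerD l_near_d (lexx _)) _; rewrite addrC subrK.
Qed.

Lemma iter_periodic {T : finType} (f : T -> T) x :
  exists i, exists2 m, (0 < m)%N & iter m f (iter i f x) = iter i f x.
Proof.
have /trajectP[i lt_i_ord loop] := looping_order f x.
exists i, (order f x - i)%N; first by rewrite subn_gt0.
by rewrite -iterD subnK ?(ltnW lt_i_ord).
Qed.

Lemma acyclic_source {R : rcfType} {n} {w : 'M[R]_n} (S : {set 'I_n}) :
  acyclic w -> S != set0 -> exists2 j, j \in S & forall i, i \in S -> w i j = 0.
Proof.
move=> w_acyclic /set0Pn[x0 x0_S].
have [/exists_inP[j j_S /forall_inP w0]|no_source] :=
  boolP [exists j in S, [forall i in S, w i j == 0]].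
  by exists j => // i /w0/eqP.
case: w_acyclic.
(* [f] picks a predecessor inside [S]; a periodic point of [f] gives a closed
   walk, read backwards. *)
pose f j := odflt j [pick i in S | edge w i j].
have f_pred j : j \in S -> (f j \in S) && edge w (f j) j.
  move=> j_S; rewrite /f; case: pickP => [i /andP[-> ->] //|no_pred].
  move/exists_inPn: no_source => /(_ j j_S)/forall_inPn[i i_S /eqP w_ij].
  by have := no_pred i; rewrite i_S /edge; move/eqP: w_ij => ->.
have iter_S k : iter k f x0 \in S.
  by elim: k => //= k IHk; case/andP: (f_pred _ IHk).
have [i [m m_gt0 y_periodic]] := iter_periodic f x0.
set y := iter i f x0 in y_periodic.
have back_path z k : z \in S -> path (fun a b => edge w b a) z (traject f (f z) k).
  elim: k z => //= k IHk z z_S; case/andP: (f_pred z z_S) => fz_S -> /=.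
  exact: IHk.
exists y, (rev (belast y (traject f (f y) m))).
rewrite size_rev size_belast size_traject m_gt0 /=.
rewrite -{1}y_periodic -last_traject rev_path back_path ?iter_S //=.
by case: m m_gt0 {y_periodic} => // m _; rewrite trajectS /= rev_cons last_rcons.
Qed.

Section Laplacian.

Context {R : rcfType} {n : nat} {w : 'M[R]_n}.

Lemma laplacian_diag i : w i i = 0 -> laplacian w i i = outdeg w i.
Proof. by move=> w_ii; rewrite !mxE eqxx mulr1n w_ii subr0. Qed.

Lemma laplacian_offdiag i j : i != j -> laplacian w i j = - w i j.
Proof. by move=> /negbTE ij; rewrite !mxE ij mulr0n sub0r. Qed.

Lemma outdeg_ge0 i : (forall j, 0 <= w i j) -> 0 <= outdeg w i.
Proof. by move=> w_ge0; apply: sumr_ge0. Qed.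

Lemma outdeg_le i : w i i = 0 -> (forall j, w i j <= 1) -> outdeg w i <= n.-1%:R.
Proof.
move=> w_ii w_le1; rewrite /outdeg (bigD1 i) //= w_ii add0r.
by rewrite -[n in n.-1]card_ord -(cardC1 i) -sumr_const ler_sum.
Qed.

Lemma laplacian_row_sum i : \sum_j laplacian w i j = 0.
Proof.
under eq_bigr => j _ do rewrite !mxE.
rewrite sumrB (bigD1 i) //= eqxx mulr1n big1 ?addr0 ?subrr // => j /negbTE ji.
by rewrite eq_sym ji.
Qed.

Lemma laplacian_eigenvalue0 : (0 < n)%N -> eigenvalue (laplacian w) 0.
Proof.
move=> n_gt0; apply/eigenvalue_colP; exists (const_mx 1).
  apply/matrixP => i k; rewrite !mxE mul0r -[RHS](laplacian_row_sum i).
  by apply: eq_bigr => j _; rewrite [const_mx _ _ _]mxE mulr1.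
by apply/cV0Pn; exists (Ordinal n_gt0); rewrite mxE oner_neq0.
Qed.

Lemma source_laplacian_eigenvalue t :
  (forall i, w i t = 0) -> eigenvalue (laplacian w) (outdeg w t).
Proof.
move=> w_t0; apply/eigenvalue_colP; exists (delta_mx t 0).
  apply/matrixP => i j; rewrite -colE !mxE w_t0 subr0 (ord1 j) eqxx andbT.
  by case: eqP => [->|]; rewrite ?mulr1n ?mulr1 ?mulr0n ?mulr0.
by apply/cV0Pn; exists t; rewrite mxE !eqxx oner_neq0.
Qed.

Lemma laplacian_gershgorin :
  simple_weighted_digraph w -> forall l, eigenvalue (cmx (laplacian w)) l ->
  exists i, `|l - (outdeg w i)%:C| <= (outdeg w i)%:C.
Proof.
move=> [w_ge0 w_loop] l /gershgorin[i disc]; exists i.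
have off_diag : \sum_(j | j != i) `|cmx (laplacian w) i j| = (outdeg w i)%:C.
  rewrite /outdeg [in RHS](bigD1 i) //= w_loop add0r rmorph_sum.
  apply: eq_bigr => j ji.
  by rewrite mxE laplacian_offdiag 1?eq_sym // rmorphN normrN ger0_norm ?ler0c.
by move: disc; rewrite off_diag [cmx _ _ _]mxE laplacian_diag.
Qed.

Lemma acyclic_laplacian_eigenvalue :
  acyclic w -> forall l, eigenvalue (cmx (laplacian w)) l -> exists j, l = (outdeg w j)%:C.
Proof.
move=> w_acyclic l /eigenvalueP[v vL /rV0Pn[k v_k]].
pose S := [set k | v 0 k != 0].
have [|j j_S j_source] := acyclic_source S w_acyclic.
  by apply/set0Pn; exists k; rewrite inE.
have v_j : v 0 j != 0 by rewrite inE in j_S.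
have vw0 k' : v 0 k' * (w k' j)%:C = 0.
  have [/j_source -> | ] := boolP (k' \in S); first by rewrite mulr0.
  by rewrite inE negbK => /eqP ->; rewrite mul0r.
have : (v *m cmx (laplacian w)) 0 j = v 0 j * (outdeg w j)%:C.
  rewrite /cmx map_mxB mulmxBr map_diag_mx mul_mx_diag !mxE big1 ?subr0 // => k' _.
  by rewrite mxE vw0.
by rewrite vL mxE [RHS]mulrC => /(mulIf v_j) ->; exists j.
Qed.

End Laplacian.

Lemma complete_dominance_weight_le1 {R : rcfType} {n} {w : 'M[R]_n} :
  complete_dominance_graph w -> forall i j, w i j <= 1.
Proof.
case=> _ [_ [_ w1]] i j; have [/w1 -> // | ] := boolP (edge w i j).
by rewrite negbK => /eqP ->; exact: ler01.
Qed.

Lemma complete_dominance_source_outdeg {R : rcfType} {n} {w : 'M[R]_n} :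
  complete_dominance_graph w -> forall t, (forall i, w i t = 0) -> outdeg w t = n.-1%:R.
Proof.
case=> [[_ w_loop] [[_ w_tour] [_ w1]]] t w_t0.
rewrite /outdeg (bigD1 t) //= w_loop add0r -[n in n.-1]card_ord -(cardC1 t).
rewrite -sumr_const; apply: eq_bigr => j jt; apply: w1.
by have := w_tour _ _ jt; rewrite /edge w_t0 eqxx.
Qed.

Theorem theorem3p9 (R : rcfType) (n : nat) (w wt : 'M[R]_n) :
  complete_dominance_graph w ->
  simple_weighted_digraph wt ->
  (forall i j, wt i j <= 1) ->
  hd_le (laplacian w) (laplacian wt) (n.-1)%:R.
Proof.
move=> w_cdg wt_simple wt_le1.
have w_acyclic : acyclic w by case: w_cdg => _ [_ []].
have [[w_ge0 w_loop] _] := w_cdg; have [wt_ge0 wt_loop] := wt_simple.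
split=> [l' /(laplacian_gershgorin wt_simple)[i disc] |
         l /(acyclic_laplacian_eigenvalue w_acyclic)[j ->]].
- have [|t _ t_source] := acyclic_source setT w_acyclic.
    by apply/set0Pn; exists i.
  have {}t_source k : w k t = 0 by rewrite t_source ?in_setT.
  exists (n.-1%:R)%:C.
    rewrite eigenvalue_map -(complete_dominance_source_outdeg w_cdg t t_source).
    exact: source_laplacian_eigenvalue.
  apply: ler_dist_shift_center disc; rewrite ?ler0c ?lecR.
    exact: outdeg_ge0.
  exact: outdeg_le.
- exists 0.
    rewrite -(rmorph0 (real_complex R)) eigenvalue_map laplacian_eigenvalue0 //.
    exact: leq_ltn_trans (leq0n j) (ltn_ord j).
  rewrite subr0 ger0_norm ?ler0c ?lecR; last exact: outdeg_ge0.
  exact/outdeg_le/complete_dominance_weight_le1.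
Qed.
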